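(* Let $k$ be a commutative artin ring, let $\Lambda$ be an artin $k$-algebra, let $X$ and $Y$ be finite length $\Lambda$-modules, and let $M\subseteq X\oplus Y$ be a submodule. Then there exist submodules $X'\subseteq X$ and $Y'\subseteq Y$ such that $M\leq_{\mathrm{deg}}X'\oplus Y'$.
   Context: For finite length $\Lambda$-modules $M,N$, one writes $M\leq_{\mathrm{deg}}N$ if there exist a finite length $\Lambda$-module $Z$ and a short exact sequence of $\Lambda$-modules $0\to Z\to M\oplus Z\to N\to 0$. *)

From HB Require Import structures.
From mathcomp Require Import all_boot all_order all_algebra.
Set Implicit Arguments. Unset Strict Implicit. Unset Printing Implicit Defensive.
Import GRing.Theory.
Local Open Scope ring_scope.

Section SubModule.
Variables (R : pzRingType) (V : lmodType R) (S : submodClosed V).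
Record subm : Type := Subm { subm_val : V; subm_prop : subm_val \in S }.
HB.instance Definition _ := [isSub for subm_val].
HB.instance Definition _ := [Choice of subm by <:].
HB.instance Definition _ := [SubChoice_isSubLmodule of subm by <:].
End SubModule.

Definition finite_length (R : pzRingType) (V : lmodType R) : Prop :=
  exists n : nat, forall (m : nat) (c : nat -> submodClosed V),
    (forall i, (i < m)%N ->
       {subset c i <= c i.+1} /\ exists x, x \in c i.+1 /\ x \notin c i) ->
    (m <= n)%N.

(* Artinian commutative ring: descending chain condition on ideals
   (ideals of k = k-submodules of the regular module k^o). *)
Definition artinian_ring (k : comNzRingType) : Prop :=
  forall c : nat -> submodClosed (k^o),
    (forall i, {subset c i.+1 <= c i}) ->
    exists N, forall i, (N <= i)%N -> c i =i c N.

(* Artin k-algebra (k artinian): Lambda is a k-algebra which is finitely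
   generated as a k-module. *)
Definition fg_over (k : comNzRingType) (L : algType k) : Prop :=
  exists s : seq L, forall x : L,
    exists a : nat -> k, x = \sum_(i < size s) a i *: s`_i.

Definition deg_le (R : pzRingType) (M N : lmodType R) : Prop :=
  exists Z : lmodType R, finite_length Z /\
    exists (f : {linear Z -> (M * Z)%type}) (g : {linear (M * Z)%type -> N}),
      injective f /\ (forall y : N, exists w, g w = y) /\
      (forall w : (M * Z)%type, g w = 0 <-> exists z, f z = w).

(* Put X' := {x | (x, 0) \in M} and Y' := the projection of M to Y. Then
   0 -> X' -> M -> Y' -> 0 is exact, with maps x |-> (x, 0) and the second
   projection.  Any short exact sequence 0 -> A -> M -> B -> 0 with A of finite
   length gives M <=_deg A (+) B, via the exact sequence
   0 -> A -> M (+) A -> A (+) B -> 0, a |-> (i a, 0), (m, a) |-> (a, p m). *)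

From HB Require Import structures.
From mathcomp Require Import all_boot all_order all_algebra.
From Stdlib Require Import ClassicalEpsilon.
Set Implicit Arguments. Unset Strict Implicit. Unset Printing Implicit Defensive.
Import GRing.Theory.
Local Open Scope ring_scope.

Definition asbool (P : Prop) : bool := if excluded_middle_informative P then true else false.

Lemma asboolP (P : Prop) : reflect P (asbool P).
Proof. by rewrite /asbool; case: excluded_middle_informative => h; constructor. Qed.

Section ImagePreimage.
Variables (R : pzRingType) (U V : lmodType R) (f : {linear U -> V}).

Definition lin_preim (S : submodClosed V) : pred U := [pred u | f u \in S].

Lemma lin_preim_submod_closed (S : submodClosed V) : submod_closed (lin_preim S).
Proof.
split=> [|a u v]; rewrite !inE ?linear0 ?rpred0 // => Su Sv.
by rewrite linearP rpredD ?rpredZ.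
Qed.

HB.instance Definition _ (S : submodClosed V) :=
  GRing.isSubmodClosed.Build R U (lin_preim S)
    (GRing.submod_closed_semi (lin_preim_submod_closed S)).

Definition preim_submod (S : submodClosed V) : submodClosed U :=
  GRing.SubmodClosed.clone R U (lin_preim S) _.

Definition lin_image (S : submodClosed U) : pred V :=
  [pred v | asbool (exists2 u, u \in S & f u = v)].

Lemma lin_imageP (S : submodClosed U) v :
  reflect (exists2 u, u \in S & f u = v) (v \in lin_image S).
Proof. by rewrite inE; apply: asboolP. Qed.

Lemma lin_image_submod_closed (S : submodClosed U) : submod_closed (lin_image S).
Proof.
split=> [|a _ _ /lin_imageP[u Su <-] /lin_imageP[v Sv <-]]; apply/lin_imageP.
  by exists 0; rewrite ?rpred0 ?linear0.
by exists (a *: u + v); rewrite ?rpredD ?rpredZ ?linearP.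
Qed.

HB.instance Definition _ (S : submodClosed U) :=
  GRing.isSubmodClosed.Build R V (lin_image S)
    (GRing.submod_closed_semi (lin_image_submod_closed S)).

Definition image_submod (S : submodClosed U) : submodClosed V :=
  GRing.SubmodClosed.clone R V (lin_image S) _.

End ImagePreimage.

Lemma finite_length_subm (R : pzRingType) (X : lmodType R) (S : submodClosed X) :
  finite_length X -> finite_length (subm S).
Proof.
move=> [n chain_le_n]; exists n => m c chain_c.
pose val_lin : {linear subm S -> X} := val.
apply: (chain_le_n m (fun i => image_submod val_lin (c i))).
move=> i /chain_c[c_sub [u [u_new u_old]]].
split=> [_ /lin_imageP[v cv <-]|]; first by apply/lin_imageP; exists v; rewrite ?c_sub.
exists (val u); split; apply/lin_imageP; first by exists u.
by case=> v cv /val_inj v_eq_u; rewrite -v_eq_u cv in u_old.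
Qed.

Section Restrictions.
Variables (R : pzRingType) (U V : lmodType R) (f : {linear U -> V}).

Definition preim_restr (S : submodClosed V) (u : subm (preim_submod f S)) : subm S :=
  Subm (subm_prop u : f (val u) \in S).

Lemma preim_restr_is_linear S : linear (@preim_restr S).
Proof. by move=> a u v; apply: val_inj; rewrite /= linearP. Qed.

HB.instance Definition _ (S : submodClosed V) :=
  GRing.isLinear.Build R (subm (preim_submod f S)) (subm S) _
  (@preim_restr S) (@preim_restr_is_linear S).

Lemma preim_restr_inj S : injective f -> injective (@preim_restr S).
Proof. by move=> f_inj u v [/f_inj /val_inj]. Qed.

Lemma mem_image_submod (S : submodClosed U) u : u \in S -> f u \in image_submod f S.
Proof. by move=> Su; apply/lin_imageP; exists u. Qed.

Definition image_corestr (S : submodClosed U) (u : subm S) : subm (image_submod f S) :=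
  Subm (mem_image_submod (subm_prop u)).

Lemma image_corestr_is_linear S : linear (@image_corestr S).
Proof. by move=> a u v; apply: val_inj; rewrite /= linearP. Qed.

HB.instance Definition _ (S : submodClosed U) :=
  GRing.isLinear.Build R (subm S) (subm (image_submod f S)) _
  (@image_corestr S) (@image_corestr_is_linear S).

Lemma image_corestr_surj S (w : subm (image_submod f S)) : exists u, image_corestr u = w.
Proof.
have /lin_imageP[u Su fu_eq] := subm_prop w.
by exists (Subm Su); apply: val_inj.
Qed.

End Restrictions.

Arguments preim_restr {R U V} f S u.
Arguments image_corestr {R U V} f S u.

Section DegenerationOfExtension.
Variables (R : pzRingType) (A M B : lmodType R).
Variables (i : {linear A -> M}) (p : {linear M -> B}).

Definition deg_le_inj (a : A) : M * A := (i a, 0).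

Lemma deg_le_inj_is_linear : linear deg_le_inj.
Proof. by move=> r a a'; congr (_, _); rewrite /= ?linearP ?scaler0 ?addr0. Qed.

HB.instance Definition _ := GRing.isLinear.Build R A (M * A)%type _
  deg_le_inj deg_le_inj_is_linear.

Definition deg_le_proj (w : M * A) : A * B := (w.2, p w.1).

Lemma deg_le_proj_is_linear : linear deg_le_proj.
Proof. by move=> r w w'; rewrite /deg_le_proj /= linearP. Qed.

HB.instance Definition _ := GRing.isLinear.Build R (M * A)%type (A * B)%type _
  deg_le_proj deg_le_proj_is_linear.

Lemma deg_le_extension :
  finite_length A -> injective i -> (forall b, exists m, p m = b) ->
  (forall m, p m = 0 <-> exists a, i a = m) ->
  deg_le M (A * B)%type.
Proof.
move=> flA i_inj p_surj ker_p_eq_im_i.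
exists A; split=> //; exists deg_le_inj, deg_le_proj; split; last split.
- by move=> a a' [/i_inj].
- by move=> [a b]; have [m pm] := p_surj b; exists (m, a); rewrite -pm.
- move=> [m a]; split=> [[/= -> /ker_p_eq_im_i[a' <-]]|[a' [<- <-]]].
    by exists a'.
  by congr (_, _); apply/ker_p_eq_im_i; exists a'.
Qed.

End DegenerationOfExtension.

Arguments deg_le_extension {R A M B} i p.

Section SubmodulesOfProduct.
Variables (R : pzRingType) (X Y : lmodType R).

Definition in_fst (x : X) : X * Y := (x, 0).

Lemma in_fst_is_linear : linear in_fst.
Proof. by move=> r x x'; congr (_, _); rewrite /= ?scaler0 ?addr0. Qed.

HB.instance Definition _ := GRing.isLinear.Build R X (X * Y)%type _ in_fst in_fst_is_linear.

Lemma in_fst_inj : injective in_fst.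
Proof. by move=> x x' []. Qed.

Variable M : submodClosed (X * Y)%type.

Lemma ker_snd_corestr (m : subm M) :
  image_corestr snd M m = 0 <-> exists a, preim_restr in_fst M a = m.
Proof.
split=> [/(congr1 val) /= m2_eq0|[a <-]]; last by apply: val_inj.
have m_eq : val m = in_fst (val m).1 by rewrite [LHS]surjective_pairing m2_eq0.
have Xm1 : (val m).1 \in preim_submod in_fst M by rewrite inE /= -m_eq subm_prop.
by exists (Subm Xm1); apply: val_inj; rewrite /= -m_eq.
Qed.

End SubmodulesOfProduct.

Arguments in_fst {R X Y}.

Theorem lemma2p2 (k : comNzRingType) (L : algType k)
  (hk : artinian_ring k) (hL : fg_over L)
  (X Y : lmodType L) (hX : finite_length X) (hY : finite_length Y)
  (M : submodClosed (X * Y)%type) :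
  exists (X' : submodClosed X) (Y' : submodClosed Y),
    deg_le (subm M) (subm X' * subm Y')%type.
Proof.
exists (preim_submod in_fst M), (image_submod snd M).
apply: (deg_le_extension (preim_restr in_fst M) (image_corestr snd M)).
- exact: finite_length_subm.
- exact/preim_restr_inj/in_fst_inj.
- exact: image_corestr_surj.
- exact: ker_snd_corestr.
Qed.
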